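(* Let $(l,k,b)$ be a suspension triplet for $(X_A,\sigma_A)$ and $c=l-k$. If $c'\in C(X_A,\mathbb Z)$ satisfies $[c]=[c']$ in $H^A$, then there exist a suspension triplet $(l',k',b')$ for $(X_A,\sigma_A)$ with $c'=l'-k'$ and a homeomorphism $\Phi:S^{l,k}_{A,b}\to S^{l',k'}_{A,b'}$ such that $\Phi\circ b_A=b'_A$ and $\Phi\circ\phi_{A,t}=\phi_{A,t}\circ\Phi$ for all $t\in\mathbb R_+$, where $b_A(x)=[x,b(x)]\in S^{l,k}_{A,b}$ and $b'_A(x)=[x,b'(x)]\in S^{l',k'}_{A,b'}$ are the base maps.
   Context: Let $N>1$ and $A$ an irreducible $N\times N$ $\{0,1\}$-matrix which is not a permutation matrix. $X_A$ is the compact space of sequences $(x_n)_{n\in\mathbb N}$, $x_n\in\{1,\dots,N\}$, $A(x_n,x_{n+1})=1$, with $\sigma_A((x_n)_n)=(x_{n+1})_n$. $\mathbb Z_+$, $\mathbb R_+$ are nonnegative integers/reals. $H^A$ is the quotient of $C(X_A,\mathbb Z)$ by $\{u-u\circ\sigma_A: u\in C(X_A,\mathbb Z)\}$, $[f]$ the class, $H^A_+$ the classes of $\mathbb Z_+$-valued continuous functions; $[f]\in H^A_+$ is an order unit if for every $[u]\in H^A$ some $n\in\mathbb N$ has $n[f]-[u]\in H^A_+$. A suspension triplet is $(l,k,b)$ with $l,k\in C(X_A,\mathbb R_+)$, $b\in C(X_A,\mathbb R)$ such that $c=l-k$ is integer-valued with $[c]$ an order unit, and $l-b$, $k-b\circ\sigma_A$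 take values in $\mathbb Z_+$. $S^{l,k}_{A,b}$ is the quotient of $\{(x,r)\in X_A\times\mathbb R: r\ge b(x)\}$ by the equivalence relation generated by $(x,r)\sim(\sigma_A(x),r-c(x))$ whenever $r\ge l(x)$, with classes $[x,r]$ and flow $\phi_{A,t}([x,r])=[x,r+t]$, $t\in\mathbb R_+$. *)

From HB Require Import structures.
From mathcomp Require Import all_boot all_order all_algebra.
From mathcomp Require Import all_classical all_reals all_analysis.
From Stdlib Require Import Relation_Operators.

Set Implicit Arguments.
Unset Strict Implicit.
Unset Printing Implicit Defensive.

Import Order.TTheory GRing.Theory Num.Theory.
Import numFieldTopology.Exports.
Local Open Scope classical_set_scope.
Local Open Scope ring_scope.

(** The full shift space on the alphabet 'I_N = {0,...,N-1} (standing for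
    {1,...,N}), with the product of discrete topologies. *)
Definition seqspace (N : nat) : Type :=
  prod_topology (fun _ : nat => discrete_topology 'I_N).

Definition irreducible_mx (N : nat) (A : 'M[int]_N) : Prop :=
  forall i j : 'I_N, exists n : nat, 0 < (A ^+ n.+1) i j.

Definition XA (N : nat) (A : 'M[int]_N) : set (seqspace N) :=
  [set x | forall n : nat, A (x n) (x n.+1) = 1].

Definition shiftA (N : nat) (x : seqspace N) : seqspace N :=
  (fun n : nat => x n.+1) : seqspace N.

Section Defs.
Variables (R : realType) (N : nat) (A : 'M[int]_N).

(** f : X_A -> R continuous (values off X_A are irrelevant) *)
Definition contR (f : seqspace N -> R) : Prop := {within XA A, continuous f}.

Definition contZ (f : seqspace N -> R) : Prop :=
  contR f /\ forall x, XA A x -> f x \is a Num.int.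

Definition contZp (f : seqspace N -> R) : Prop :=
  contR f /\ forall x, XA A x -> f x \is a Num.nat.

Definition cohomologous (f g : seqspace N -> R) : Prop :=
  exists u, contZ u /\ forall x, XA A x -> f x - g x = u x - u (shiftA x).

Definition Hpos (f : seqspace N -> R) : Prop :=
  exists g, contZp g /\ cohomologous f g.

Definition order_unit (f : seqspace N -> R) : Prop :=
  Hpos f /\
  forall u, contZ u -> exists n : nat, Hpos (fun x => f x *+ n - u x).

Definition suspension_triplet (l k b : seqspace N -> R) : Prop :=
  [/\ contR l /\ contR k /\ contR b,
      (forall x, XA A x -> 0 <= l x /\ 0 <= k x),
      contZ (l \- k) /\ order_unit (l \- k),
      (forall x, XA A x -> l x - b x \is a Num.nat) &
      (forall x, XA A x -> k x - b (shiftA x) \is a Num.nat)].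

Definition Tsp : Type := (seqspace N * R)%type.

Definition Dom (b : seqspace N -> R) : set Tsp :=
  [set p | XA A p.1 /\ b p.1 <= p.2].

Definition susp_step (l k b : seqspace N -> R) (p q : Tsp) : Prop :=
  [/\ Dom b p, l p.1 <= p.2 & q = (shiftA p.1, p.2 - (l p.1 - k p.1))].

Definition susp_eqv (l k b : seqspace N -> R) : Tsp -> Tsp -> Prop :=
  clos_refl_sym_trans Tsp (susp_step l k b).

Definition is_class (l k b : seqspace N -> R) (C : set Tsp) : Prop :=
  exists p, Dom b p /\ C = susp_eqv l k b p.

Definition susp (l k b : seqspace N -> R) : Type :=
  {C : set Tsp | is_class l k b C}.

End Defs.

Section SuspTopology.
Variables (R : realType) (N : nat) (A : 'M[int]_N) (l k b : seqspace N -> R).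

Local Notation eqv := (susp_eqv A l k b).
Local Notation S := (susp A l k b).

Lemma susp_eqv_sym p q : eqv p q -> eqv q p.
Proof. exact: rst_sym. Qed.

Lemma susp_eqv_trans p q r : eqv p q -> eqv q r -> eqv p r.
Proof. exact: rst_trans. Qed.

Lemma susp_class_eq (C1 C2 : S) p : sval C1 p -> sval C2 p -> C1 = C2.
Proof.
case: C1 => [S1 H1]; case: C2 => [S2 H2] /= h1 h2.
have E : S1 = S2.
  case: H1 => p1 [_ E1]; case: H2 => p2 [_ E2].
  rewrite E1 in h1; rewrite E2 in h2; rewrite E1 E2.
  apply/funext => q; apply/propext; split => h.
  - exact: susp_eqv_trans h2 (susp_eqv_trans (susp_eqv_sym h1) h).
  - exact: susp_eqv_trans h1 (susp_eqv_trans (susp_eqv_sym h2) h).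
subst S2; congr exist; exact: Prop_irrelevance.
Qed.

Definition susp_cls (p : Tsp R N) (hp : Dom A b p) : S :=
  exist _ (eqv p) (ex_intro _ p (conj hp erefl)).

Definition susp_pre (W : set S) : set (subspace (Dom A b)) :=
  [set p | Dom A b p /\ exists C : S, W C /\ sval C p].

Definition susp_open (W : set S) : Prop := open (susp_pre W).

End SuspTopology.

HB.instance Definition _ (R : realType) N A l k b :=
  gen_eqMixin (@susp R N A l k b).
HB.instance Definition _ (R : realType) N A l k b :=
  gen_choiceMixin (@susp R N A l k b).

Section SuspTopology2.
Variables (R : realType) (N : nat) (A : 'M[int]_N) (l k b : seqspace N -> R).
Local Notation S := (susp A l k b).
Local Notation sopen := (@susp_open R N A l k b).

Lemma susp_openT : sopen [set: S].
Proof.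
rewrite /susp_open (_ : susp_pre _ = Dom A b); first exact: open_subspaceT.
apply/funext => p; apply/propext; split; first by case.
by move=> hp; split => //; exists (susp_cls l k hp); split => //=; exact: rst_refl.
Qed.

Lemma susp_openI : setI_closed (sopen).
Proof.
move=> W1 W2 o1 o2; rewrite /susp_open.
rewrite (_ : susp_pre _ = (@susp_pre R N A l k b W1) `&` (@susp_pre R N A l k b W2)).
  exact: openI.
apply/funext => p; apply/propext; split.
  by case=> hp [C [[w1 w2] hC]]; split; split => //; exists C.
case=> [[hp [C1 [w1 h1]]] [_ [C2 [w2 h2]]]]; split => //; exists C1.
by split => //; split => //; rewrite (susp_class_eq h1 h2).
Qed.

Lemma susp_open_bigU (I : Type) (f : I -> set S) :
  (forall i, sopen (f i)) -> sopen (\bigcup_i f i).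
Proof.
move=> hf; rewrite /susp_open.
rewrite (_ : susp_pre _ = \bigcup_i @susp_pre R N A l k b (f i)).
  by apply: bigcup_open => i _; exact: hf.
apply/funext => p; apply/propext; split.
  by case=> hp [C [[i _ fi] hC]]; exists i => //; split => //; exists C.
by case=> i _ [hp [C [fi hC]]]; split => //; exists C; split => //; exists i.
Qed.

End SuspTopology2.

HB.instance Definition _ (R : realType) N A l k b :=
  isOpenTopological.Build (@susp R N A l k b)
    (@susp_openT R N A l k b) (@susp_openI R N A l k b)
    (@susp_open_bigU R N A l k b).

Section SuspFlow.
Variables (R : realType) (N : nat) (A : 'M[int]_N) (l k b : seqspace N -> R).
Local Notation eqv := (susp_eqv A l k b).
Local Notation S := (susp A l k b).

Definition tshift (t : R) (p : Tsp R N) : Tsp R N := (p.1, p.2 + t).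

Lemma susp_step_shift (t : R) p q : 0 <= t ->
  susp_step A l k b p q -> susp_step A l k b (tshift t p) (tshift t q).
Proof.
move=> t0 [[hx hb] hl ->]; split => /=.
- by split => //; rewrite (le_trans hb) // lerDl.
- by rewrite (le_trans hl) // lerDl.
- by rewrite /tshift /=; congr pair; rewrite addrAC.
Qed.

Lemma susp_eqv_shift (t : R) p q : 0 <= t -> eqv p q -> eqv (tshift t p) (tshift t q).
Proof.
move=> t0; elim=> [p' q' h| p'|p' q' _ ih|p' q' r' _ ih1 _ ih2].
- by apply: rst_step; exact: susp_step_shift.
- exact: rst_refl.
- exact: rst_sym.
- exact: rst_trans ih1 ih2.
Qed.

Lemma susp_flow_class (t : {nonneg R}) (C : S) :
  is_class A l k b [set q | exists p, sval C p /\ eqv (tshift t%:num p) q].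
Proof.
case: C => S1 H /=; case: H => p0 [hp0 ->].
exists (tshift t%:num p0); split.
  case: hp0 => hx hb; split => //=; rewrite (le_trans hb) // lerDl //.
apply/funext => q; apply/propext; split.
  case=> p [h1 h2]; apply: rst_trans h2.
  exact: susp_eqv_shift.
by move=> h; exists p0; split => //; exact: rst_refl.
Qed.

Definition susp_flow (t : {nonneg R}) (C : S) : S :=
  exist _ _ (susp_flow_class t C).

Lemma base_dom (x : seqspace N) : XA A x -> Dom A b (x, b x).
Proof. by move=> hx; split. Qed.

Definition susp_base (x : seqspace N) (hx : XA A x) : S :=
  susp_cls l k (base_dom hx).

End SuspFlow.

Definition homeomorphism (X Y : topologicalType) (f : X -> Y) : Prop :=
  continuous f /\ exists g : Y -> X, [/\ continuous g, cancel f g & cancel g f].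

From HB Require Import structures.
From mathcomp Require Import all_boot all_order all_algebra.
From mathcomp Require Import all_classical all_reals all_analysis.
From Stdlib Require Import Relation_Operators.
From mathcomp Require Import lra.

Set Implicit Arguments.
Unset Strict Implicit.

Import Order.TTheory GRing.Theory Num.Theory.
Import numFieldTopology.Exports.
Local Open Scope classical_set_scope.
Local Open Scope ring_scope.

(* If l - k - c' = u - u o sigma_A, translate every fibre by v := M - u,
   with M an upper bound of u on the compact space X_A.  The map
   (x, r) |-> (x, r + v x) sends the suspension data (l, k, b) to
   (l + v, k + v o sigma_A, b + v), whose roof difference is c'; it
   commutes with the identifications (x, r) ~ (sigma_A x, r - c x), with
   the base maps and with the translations in r, so it descends to a
   conjugacy of the suspension flows.  The choice of M keeps l + v and
   k + v o sigma_A nonnegative, and the order-unit condition only depends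
   on the cohomology class. *)

Lemma cvg_seqspace N (F : set_system (seqspace N)) (t : seqspace N) : Filter F ->
  (forall i, (fun f : seqspace N => f i) @ F --> (t i : discrete_topology 'I_N)) ->
  F --> t.
Proof.
move=> FF Ft; apply/cvg_sup => i U /=.
rewrite /nbhs /= => -[B [[V oV VB] Bt BU]].
apply: (filterS BU); rewrite -VB; apply: Ft.
by apply: open_nbhs_nbhs; split => //; rewrite -VB in Bt.
Qed.

Lemma continuous_shiftA N : continuous (@shiftA N).
Proof.
move=> x; apply: (@cvg_seqspace N (@shiftA N @ nbhs x) (shiftA x)) => i U.
exact: (@proj_continuous nat (fun _ => discrete_topology 'I_N) i.+1 x U).
Qed.

Lemma continuous_within_comp (X Y Z : topologicalType) (g : X -> Y) (f : Y -> Z)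
    (P : set X) (Q : set Y) :
  continuous g -> (forall x, P x -> Q (g x)) -> {within Q, continuous f} ->
  {within P, continuous (f \o g)}.
Proof.
move=> cg gPQ /subspace_continuousP cf; apply/subspace_continuousP => x Px W hW.
have Ngx : nbhs (g x) [set y | Q y -> W (f y)] := cf (g x) (gPQ x Px) W hW.
rewrite /= nbhs_simpl /=.
suff : nbhs x [set y | P y -> W (f (g y))] by [].
have Nx : nbhs x (g @^-1` [set y | Q y -> W (f y)]) := cg x _ Ngx.
by apply: filterS Nx => y /= Wy Py; exact: Wy (gPQ y Py).
Qed.

Lemma XA_closed N (A : 'M[int]_N) : closed (XA A).
Proof.
move=> x clx n.
have Nx : nbhs x [set y : seqspace N | y n = x n /\ y n.+1 = x n.+1].
  apply: filterI.
  - exact: (@proj_continuous nat _ n x [set z | z = x n] (discrete_set1 _)).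
  - exact: (@proj_continuous nat _ n.+1 x [set z | z = x n.+1] (discrete_set1 _)).
by have [y [Xy [<- <-]]] := clx _ Nx.
Qed.

Lemma XA_compact N (A : 'M[int]_N) : compact (XA A).
Proof.
apply: (@subclosed_compact _ _ [set: seqspace N]); [exact: XA_closed | | by []].
have := @tychonoff nat (fun _ => discrete_topology 'I_N) (fun _ => setT) _.
rewrite (_ : [set f | _] = setT); last by apply/funext => f; apply/propext.
by apply => _; apply: finite_compact; exact: finite_finset.
Qed.

Lemma XA_shiftA N (A : 'M[int]_N) x : XA A x -> XA A (shiftA x).
Proof. by move=> Ax n; exact: Ax. Qed.

Section ContinuousFunctions.
Variables (R : realType) (N : nat) (A : 'M[int]_N).

Lemma contR_cst (c : R) : contR A (fun _ => c).
Proof. by apply/subspace_continuousP => x _; exact: cvg_cst. Qed.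

Lemma contRD (f g : seqspace N -> R) : contR A f -> contR A g -> contR A (fun x => f x + g x).
Proof.
move=> /subspace_continuousP cf /subspace_continuousP cg.
by apply/subspace_continuousP => x Ax; exact: cvgD (cf x Ax) (cg x Ax).
Qed.

Lemma contRN (f : seqspace N -> R) : contR A f -> contR A (fun x => - f x).
Proof.
move=> /subspace_continuousP cf.
by apply/subspace_continuousP => x Ax; exact: cvgN (cf x Ax).
Qed.

Lemma contRB (f g : seqspace N -> R) : contR A f -> contR A g -> contR A (fun x => f x - g x).
Proof.
move=> /subspace_continuousP cf /subspace_continuousP cg.
by apply/subspace_continuousP => x Ax; exact: cvgB (cf x Ax) (cg x Ax).
Qed.

Lemma contRMn (f : seqspace N -> R) n : contR A f -> contR A (fun x => f x *+ n).
Proof.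
move=> /subspace_continuousP cf.
by apply/subspace_continuousP => x Ax; exact: cvgMn (cf x Ax).
Qed.

Lemma contR_shiftA (f : seqspace N -> R) : contR A f -> contR A (fun x => f (shiftA x)).
Proof.
by move=> cf; exact: (continuous_within_comp (@continuous_shiftA N) (@XA_shiftA N A) cf).
Qed.

Lemma contR_ubound (f : seqspace N -> R) : contR A f -> exists M, forall x, XA A x -> f x <= M.
Proof.
move=> cf; have [M0 [_ M0f]] := compact_bounded (continuous_compact cf (@XA_compact N A)).
exists (M0 + 1) => x Ax.
apply: le_trans (ler_norm _) (M0f (M0 + 1) _ (f x) (ex_intro2 _ _ x Ax erefl)).
by rewrite ltrDl.
Qed.

Lemma contZB (f g : seqspace N -> R) : contZ A f -> contZ A g -> contZ A (fun x => f x - g x).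
Proof.
move=> [cf Zf] [cg Zg]; split; first exact: contRB.
by move=> x Ax; apply: rpredB; [exact: Zf | exact: Zg].
Qed.

Lemma contZMn (f : seqspace N -> R) n : contZ A f -> contZ A (fun x => f x *+ n).
Proof.
move=> [cf Zf]; split; first exact: contRMn.
by move=> x Ax; apply: rpredMn; exact: Zf.
Qed.

End ContinuousFunctions.

Section Cohomology.
Variables (R : realType) (N : nat) (A : 'M[int]_N).

Lemma Hpos_cohomologous (f g : seqspace N -> R) :
  cohomologous A f g -> Hpos A f -> Hpos A g.
Proof.
move=> [u [Zu fg]] [h [Zh [w [Zw fh]]]]; exists h; split => //.
exists (fun x => w x - u x); split; first exact: contZB.
by move=> x Ax; have := fg x Ax; have := fh x Ax; lra.
Qed.

Lemma order_unit_cohomologous (f g : seqspace N -> R) :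
  cohomologous A f g -> order_unit A f -> order_unit A g.
Proof.
move=> fg [Hf fu]; split; first exact: Hpos_cohomologous Hf.
move=> w Zw; have [n Hn] := fu w Zw; exists n.
case: fg => u [Zu fg]; apply: Hpos_cohomologous Hn.
exists (fun x => u x *+ n); split; first exact: contZMn.
by move=> x Ax; rewrite -mulrnBl -fg // mulrnBl; lra.
Qed.

Lemma suspension_triplet_translate (l k b u : seqspace N -> R) (M : R) :
  suspension_triplet A l k b -> contZ A u -> (forall x, XA A x -> u x <= M) ->
  suspension_triplet A (fun x => l x + (M - u x)) (fun x => k x + (M - u (shiftA x)))
    (fun x => b x + (M - u x)).
Proof.
move=> [[cl [ck cb]] lk0 [Zc cu] lb kb] [cu0 Zu] uM.
have cv : contR A (fun x => M - u x) by apply: contRB; [exact: contR_cst | exact: cu0].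
have coh : cohomologous A (l \- k)
    (fun x => l x + (M - u x) - (k x + (M - u (shiftA x)))).
  by exists u; split => // x Ax /=; lra.
have cl' := contRD cl cv; have ck' := contRD ck (contR_shiftA cv).
split.
- by split; [|split] => //; exact: contRD.
- move=> x Ax; have := lk0 x Ax; have := uM x Ax; have := uM _ (XA_shiftA Ax); lra.
- split; last exact: order_unit_cohomologous cu.
  case: Zc => _ Zcx; split; first exact: (contRB cl' ck').
  move=> x Ax /=.
  have -> : l x + (M - u x) - (k x + (M - u (shiftA x))) =
            (l x - k x) - (u x - u (shiftA x)) by lra.
  by apply: rpredB; [exact: Zcx | apply: rpredB; [exact: Zu | exact/Zu/XA_shiftA]].
- move=> x Ax; have -> : l x + (M - u x) - (b x + (M - u x)) = l x - b x by lra.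
  exact: lb.
- move=> x Ax.
  have -> : k x + (M - u (shiftA x)) - (b (shiftA x) + (M - u (shiftA x))) =
            k x - b (shiftA x) by lra.
  exact: kb.
Qed.

End Cohomology.

Lemma susp_class_rep (R : realType) (N : nat) (A : 'M[int]_N) (l k b : seqspace N -> R)
    (C : susp A l k b) :
  exists p, sval C p.
Proof. by case: C => C [p [hp EC]]; exists p; rewrite /= EC; exact: rst_refl. Qed.

Section SuspensionMap.
Variables (R : realType) (N : nat) (A : 'M[int]_N) (l k b l' k' b' : seqspace N -> R).
Variable T : Tsp R N -> Tsp R N.
Hypothesis T_Dom : forall p, Dom A b p -> Dom A b' (T p).
Hypothesis T_step : forall p q, susp_step A l k b p q -> susp_step A l' k' b' (T p) (T q).

Lemma susp_eqv_map p q : susp_eqv A l k b p q -> susp_eqv A l' k' b' (T p) (T q).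
Proof.
elim=> [p1 q1 h | p1 | p1 q1 _ ih | p1 q1 r1 _ ih1 _ ih2].
- exact/rst_step/T_step.
- exact: rst_refl.
- exact: rst_sym.
- exact: rst_trans ih1 ih2.
Qed.

Lemma susp_map_class (C : susp A l k b) :
  is_class A l' k' b' [set q | exists p, sval C p /\ susp_eqv A l' k' b' (T p) q].
Proof.
case: C => C [p0 [hp0 EC]] /=; rewrite EC; exists (T p0); split; first exact: T_Dom.
apply/funext => q; apply/propext; split.
  by case=> p [h1 h2]; apply: rst_trans h2; exact: susp_eqv_map.
by move=> h; exists p0; split => //; exact: rst_refl.
Qed.

Definition susp_map (C : susp A l k b) : susp A l' k' b' :=
  exist _ _ (susp_map_class C).

Lemma susp_map_mem C p : sval C p -> sval (susp_map C) (T p).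
Proof. by move=> h; exists p; split => //; exact: rst_refl. Qed.

Lemma susp_map_base (x : seqspace N) (hx : XA A x) :
  T (x, b x) = (x, b' x) -> susp_map (susp_base l k b hx) = susp_base l' k' b' hx.
Proof.
move=> Tx; apply: (@susp_class_eq _ _ _ _ _ _ _ _ (x, b' x)); last exact: rst_refl.
by rewrite -Tx; apply: susp_map_mem; exact: rst_refl.
Qed.

Lemma susp_map_flow (t : {nonneg R}) (C : susp A l k b) :
  (forall p, T (tshift t%:num p) = tshift t%:num (T p)) ->
  susp_map (susp_flow t C) = susp_flow t (susp_map C).
Proof.
move=> Tt; have [p Cp] := susp_class_rep C.
apply: (@susp_class_eq _ _ _ _ _ _ _ _ (T (tshift t%:num p))).
  by apply: susp_map_mem; exists p; split => //; exact: rst_refl.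
by exists (T p); split; [exact: susp_map_mem | rewrite Tt; exact: rst_refl].
Qed.

Lemma susp_pre_map (W : set (susp A l' k' b')) :
  susp_pre (susp_map @^-1` W) = Dom A b `&` T @^-1` susp_pre W.
Proof.
apply/funext => p; apply/propext; split.
  case=> hp [C [WC Cp]]; split => //; split; first exact: T_Dom.
  by exists (susp_map C); split => //; exact: susp_map_mem.
case=> hp [_ [C [WC Cp]]]; split => //; exists (susp_cls l k hp).
split; last exact: rst_refl.
suff E : susp_map (susp_cls l k hp) = C by move: WC; rewrite -E.
by apply: (susp_class_eq _ Cp); apply: susp_map_mem; exact: rst_refl.
Qed.

Lemma continuous_susp_map : {within Dom A b, continuous T} -> continuous susp_map.
Proof.
move=> /continuousP Tcont; apply/continuousP => W oW.
change (open (susp_pre (susp_map @^-1` W))); rewrite susp_pre_map.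
have /open_subspaceP [V oV VE] : open (susp_pre W) := oW.
have -> : Dom A b `&` T @^-1` susp_pre W = Dom A b `&` T @^-1` V.
  apply/funext => p; apply/propext; split => -[hp hT]; split => //.
    have : (susp_pre W `&` Dom A b') (T p) by split => //; exact: T_Dom.
    by rewrite -VE => -[].
  have : (V `&` Dom A b') (T p) by split => //; exact: T_Dom.
  by rewrite VE => -[].
exact/openI/Tcont/oV/open_subspaceT.
Qed.

End SuspensionMap.

Lemma susp_map_cancel (R : realType) (N : nat) (A : 'M[int]_N)
    (l k b l' k' b' : seqspace N -> R) (T T' : Tsp R N -> Tsp R N)
    (TD : forall p, Dom A b p -> Dom A b' (T p))
    (Tstep : forall p q, susp_step A l k b p q -> susp_step A l' k' b' (T p) (T q))
    (T'D : forall p, Dom A b' p -> Dom A b (T' p))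
    (T'step : forall p q, susp_step A l' k' b' p q -> susp_step A l k b (T' p) (T' q)) :
  cancel T T' -> cancel (susp_map TD Tstep) (susp_map T'D T'step).
Proof.
move=> TK C; have [p Cp] := susp_class_rep C.
apply: (susp_class_eq _ Cp).
by rewrite -(TK p); apply: susp_map_mem; exact: susp_map_mem.
Qed.

Section FibreTranslation.
Variables (R : realType) (N : nat) (A : 'M[int]_N).

Definition fibre_translate (v : seqspace N -> R) (p : Tsp R N) : Tsp R N :=
  (p.1, p.2 + v p.1).

Lemma fibre_translateK (v : seqspace N -> R) :
  cancel (fibre_translate v) (fibre_translate (fun x => - v x)).
Proof. by case=> x r; rewrite /fibre_translate /= addrK. Qed.

Lemma fibre_translate_tshift (v : seqspace N -> R) (t : R) p :
  fibre_translate v (tshift t p) = tshift t (fibre_translate v p).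
Proof. by rewrite /fibre_translate /tshift /= addrAC. Qed.

Lemma continuous_fibre_translate (v : seqspace N -> R) (b : seqspace N -> R) :
  contR A v -> {within Dom A b, continuous (fibre_translate v)}.
Proof.
move=> cv.
have cfst : continuous (@fst (seqspace N) R) by case=> x r; exact: cvg_fst.
have csnd : continuous (@snd (seqspace N) R) by case=> x r; exact: cvg_snd.
have /subspace_continuousP cv1 : {within Dom A b, continuous (v \o fst)}.
  apply: (@continuous_within_comp _ _ _ fst v _ (XA A)) => //.
  by move=> p [].
apply/subspace_continuousP => p Dp.
have c1 : (fun q : Tsp R N => q.1) @ within (Dom A b) (nbhs p) --> p.1.
  by apply: cvg_trans (cfst p); apply: cvg_app; exact: cvg_within.
have c2 : (fun q : Tsp R N => q.2 + v q.1) @ within (Dom A b) (nbhs p) --> p.2 + v p.1.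
  apply: cvgD; last exact: cv1.
  by apply: cvg_trans (csnd p); apply: cvg_app; exact: cvg_within.
exact: (cvg_pair c1 c2).
Qed.

Variables (l k b l' k' b' v : seqspace N -> R).
Hypothesis l'E : forall x, XA A x -> l' x = l x + v x.
Hypothesis k'E : forall x, XA A x -> k' x = k x + v (shiftA x).
Hypothesis b'E : forall x, XA A x -> b' x = b x + v x.

Lemma Dom_fibre_translate p : Dom A b p -> Dom A b' (fibre_translate v p).
Proof. by case: p => x r [Ax /= br]; split => //=; rewrite b'E // lerD2r. Qed.

Lemma susp_step_fibre_translate p q :
  susp_step A l k b p q -> susp_step A l' k' b' (fibre_translate v p) (fibre_translate v q).
Proof.
case: p => x r [Dp /= lr ->]; have Ax := Dp.1.
split => /=; first exact: Dom_fibre_translate.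
  by rewrite l'E // lerD2r.
by rewrite /fibre_translate /= l'E // k'E //; congr pair; lra.
Qed.

End FibreTranslation.

Lemma susp_fibre_translate_conjugacy (R : realType) (N : nat) (A : 'M[int]_N)
    (l k b l' k' b' v : seqspace N -> R) :
  contR A v ->
  (forall x, XA A x -> l' x = l x + v x) ->
  (forall x, XA A x -> k' x = k x + v (shiftA x)) ->
  (forall x, XA A x -> b' x = b x + v x) ->
  exists Phi : susp A l k b -> susp A l' k' b',
    [/\ homeomorphism Phi,
        (forall (x : seqspace N) (hx : XA A x),
            Phi (susp_base l k b hx) = susp_base l' k' b' hx) &
        (forall (t : {nonneg R}) (C : susp A l k b),
            Phi (susp_flow t C) = susp_flow t (Phi C))].
Proof.
move=> cv l'E k'E b'E.
have lE x : XA A x -> l x = l' x + - v x by move=> Ax; rewrite l'E // addrK.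
have kE x : XA A x -> k x = k' x + - v (shiftA x) by move=> Ax; rewrite k'E // addrK.
have bE x : XA A x -> b x = b' x + - v x by move=> Ax; rewrite b'E // addrK.
pose Phi := susp_map (Dom_fibre_translate b'E) (susp_step_fibre_translate l'E k'E b'E).
pose Psi := susp_map (Dom_fibre_translate bE) (susp_step_fibre_translate lE kE bE).
exists Phi; split.
- split; first exact/continuous_susp_map/continuous_fibre_translate.
  exists Psi; split.
  + exact/continuous_susp_map/continuous_fibre_translate/contRN.
  + exact/susp_map_cancel/fibre_translateK.
  + apply: susp_map_cancel => p; rewrite -[RHS](fibre_translateK (fun x => - v x)).
    by congr fibre_translate; apply/funext => x; rewrite opprK.
- by move=> x Ax; apply: susp_map_base; rewrite /fibre_translate /= b'E.
- by move=> t C; apply: susp_map_flow => p; exact: fibre_translate_tshift.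
Qed.

Theorem lemma2p6 (R : realType) (N : nat) (A : 'M[int]_N)
  (hN : (1 < N)%N)
  (hA01 : forall i j : 'I_N, A i j = 0 \/ A i j = 1)
  (hirr : irreducible_mx A)
  (hnperm : ~~ is_perm_mx A)
  (l k b : seqspace N -> R)
  (htrip : suspension_triplet A l k b)
  (c' : seqspace N -> R)
  (hc' : contZ A c')
  (hcoh : cohomologous A (l \- k) c') :
  exists (l' k' b' : seqspace N -> R),
    [/\ suspension_triplet A l' k' b',
        (forall x, XA A x -> c' x = l' x - k' x) &
        exists Phi : susp A l k b -> susp A l' k' b',
          [/\ homeomorphism Phi,
              (forall (x : seqspace N) (hx : XA A x),
                  Phi (susp_base l k b hx) = susp_base l' k' b' hx) &
              (forall (t : {nonneg R}) (C : susp A l k b),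
                  Phi (susp_flow t C) = susp_flow t (Phi C))]].
Proof.
have [u [Zu cu]] := hcoh.
have [M uM] := contR_ubound Zu.1.
pose v x := M - u x.
exists (fun x => l x + v x), (fun x => k x + v (shiftA x)), (fun x => b x + v x); split.
- exact: suspension_triplet_translate.
- by move=> x Ax; have := cu x Ax; rewrite /v /=; lra.
- apply: susp_fibre_translate_conjugacy => //.
  by apply: contRB; [exact: contR_cst | exact: Zu.1].
Qed.
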